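(* Let $n\ge 2$ and $1\le \ell\le n-1$. Let $\mathbf{x}=(x_1,\dots,x_n)$ satisfy $x_1\le\dots\le x_\ell<0\le x_{\ell+1}\le\dots\le x_n$, and let $M=\mathbf{x}^T\mathbf{x}$, with pairwise distinct off-diagonal entries. Then for all $t\in[0,1]$, $\beta_1(t)\le(\ell-1)(n-\ell-1)$, with equality when $G_t(M)$ is the complete bipartite graph $K_{\ell,n-\ell}$ (with parts $\{1,\dots,\ell\}$ and $\{\ell+1,\dots,n\}$). Moreover $\beta_k(t)=0$ for all $k>1$ and all $t\in[0,1]$.
   Context: Betti curves of a symmetric matrix. Let $M$ be a real symmetric $n\times n$ matrix whose $\binom{n}{2}$ off-diagonal entries $M_{ij}$ ($i<j$) are pairwise distinct. The ordering matrix $\widehat{M}$ is defined by $\widehat{M}_{ij}=k$ if $M_{ij}$ is the $k$-th smallest off-diagonal entry. For $t\in[0,1]$, $G_t=G_t(M)$ is the graph on vertex set $\{1,\dots,n\}$ with edge set $\{\{i,j\} : \widehat{M}_{ij}\le t\binom{n}{2}\}$ (so edges are added in increasing order of the entries $M_{ij}$; $G_0$ has no edges and $G_1$ is complete). $X(G_t)$ is the clique complex of $G_t$ (every $k$-clique of $G_t$ is filled in by a $(k-1)$-dimensional simplex). The $i$-th Betti curve of $M$ is $\beta_i(t)=\operatorname{rank} H_i(X(G_t);\mathbf{k})$, with $H_i$ simplicial homology with coefficients in a fixed field $\mathbf{k}$. Here $\mathbf{x}$ is a row vector, so $\mathbf{x}^T\mathbf{x}$ is the $n\times n$ matrix with entries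 $x_ix_j$. *)

From HB Require Import structures.
From mathcomp Require Import all_boot all_order all_algebra.
Set Implicit Arguments. Unset Strict Implicit. Unset Printing Implicit Defensive.
Import Order.TTheory GRing.Theory Num.Theory.
Local Open Scope ring_scope.

Section Graph.
Variable R : realFieldType.
Variable n : nat.

(* When entries are
   pairwise distinct this is the k with M i j the k-th smallest. *)
Definition entry_rank (M : 'M[R]_n) (i j : 'I_n) : nat :=
  (#|[set p : 'I_n * 'I_n | (p.1 < p.2)%N && (M p.1 p.2 < M i j)]|).+1.

Definition Gt (M : 'M[R]_n) (t : R) : rel 'I_n :=
  fun i j => (i != j) && ((entry_rank M i j)%:R <= t * ('C(n, 2))%:R).
End Graph.

Section Clique.
Variable F : fieldType.
Variable n : nat.
Variable e : rel 'I_n.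

Definition is_simplex (S : {set 'I_n}) : bool :=
  (S != set0) && [forall u in S, forall v in S, (u != v) ==> e u v].

Definition is_ksimplex (k : nat) (S : {set 'I_n}) : bool :=
  is_simplex S && (#|S| == k.+1).

Definition N := #|{set 'I_n}|.

(* Boundary map d_k : C_k -> C_{k-1}, acting on row vectors indexed by all
   subsets of vertices (via enum_val); rows of non-k-simplices are zero.
   d [v_0 < ... < v_k] = sum_i (-1)^i [.. ^v_i ..]; d_0 = 0 (unreduced). *)
Definition boundary (k : nat) : 'M[F]_N :=
  \matrix_(a < N, b < N)
    let S := enum_val a in let T := enum_val b in
    if is_ksimplex k S && is_simplex T then
      \sum_(v in S | T == S :\ v) (-1) ^+ #|[set u in S | (u < v)%N]|
    else 0.

(* The chain space C_k as the row space spanned by the k-simplices. *)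
Definition chains (k : nat) : 'M[F]_N :=
  diag_mx (\row_(a < N) (is_ksimplex k (enum_val a))%:R).

Definition cycles (k : nat) : 'M[F]_N := (chains k :&: kermx (boundary k))%MS.
Definition boundaries (k : nat) : 'M[F]_N := (chains k.+1 *m boundary k.+1)%MS.

Definition betti (k : nat) : nat := (\rank (cycles k) - \rank (boundaries k))%N.
End Clique.

From HB Require Import structures.
From mathcomp Require Import all_boot all_order all_algebra.
From mathcomp Require Import ring lra zify.
Set Implicit Arguments. Unset Strict Implicit. Unset Printing Implicit Defensive.
Import Order.TTheory GRing.Theory Num.Theory.
Local Open Scope ring_scope.

(* Call the vertices u < l "left" and the others "right".  The entry x_u x_v is
   negative exactly for crossing pairs, so the edges of G_t either all cross the
   partition or include every crossing pair.  On each side the products are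
   monotone in |x|, so the left vertex a0 = l - 1 and the right vertex b0 = l
   are hubs: a vertex with a neighbour on its own side is adjacent to its hub.

   Section SplitThreshold uses only
   the hub properties: reducing a cycle at b0 leaves a chain on simplices with a
   single right vertex.  In dimension 1 such a cycle is determined by its values
   on the (l - 1)(n - l - 1) crossing edges avoiding the hubs; in dimension >= 2
   it lies in the star of a0, hence is a boundary.  For K_{l, n - l} the bound
   b_1 >= #edges - (n - 1) gives equality. *)

Section CliqueComplex.
Variable F : fieldType.
Variable n : nat.
Variable e : rel 'I_n.

Local Notation NN := (N n).
Local Notation simplex := (is_simplex e).
Local Notation ksimplex := (is_ksimplex e).
Local Notation bd := (boundary F e).
Local Notation ch := (chains F e).

Definition cell (a : 'I_NN) : {set 'I_n} := enum_val a.
Definition cell_idx (S : {set 'I_n}) : 'I_NN := enum_rank S.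

Lemma cell_idxK S : cell (cell_idx S) = S. Proof. exact: enum_rankK. Qed.
Lemma cellK a : cell_idx (cell a) = a. Proof. exact: enum_valK. Qed.
Lemma cell_inj : injective cell. Proof. exact: can_inj cellK. Qed.
Lemma cell_idx_inj : injective cell_idx. Proof. exact: can_inj cell_idxK. Qed.

(* Incidence sign of the facet S :\ v of S: (-1)^(position of v in S). *)
Definition sgn (S : {set 'I_n}) (v : 'I_n) : F :=
  (-1) ^+ #|[set u in S | (u < v)%N]|.

Lemma sgn_sq S v : sgn S v * sgn S v = 1.
Proof. by rewrite /sgn -exprMn mulrNN mulr1 expr1n. Qed.

Lemma sgn_neq0 S v : sgn S v != 0.
Proof. by apply: contra_eq_neq (sgn_sq S v) => ->; rewrite mul0r eq_sym oner_neq0. Qed.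

Lemma boundaryE k a b : bd k a b =
  if ksimplex k (cell a) && simplex (cell b) then
    \sum_(v in cell a | cell b == cell a :\ v) sgn (cell a) v else 0.
Proof. by rewrite mxE. Qed.

Lemma simplex_edge (S : {set 'I_n}) p q : simplex S -> p \in S -> q \in S -> p != q -> e p q.
Proof. by case/andP => _ /forall_inP H pS qS; apply/implyP/(forall_inP (H p pS)). Qed.

Lemma simplex1 v : simplex [set v].
Proof.
apply/andP; split; first by apply/set0Pn; exists v; rewrite set11.
by apply/forall_inP => u /set1P -> ; apply/forall_inP => w /set1P ->; rewrite eqxx.
Qed.

Lemma simplex_sub (S T : {set 'I_n}) : simplex S -> T \subset S -> T != set0 -> simplex T.
Proof.
move=> HS /subsetP sub ne; rewrite /is_simplex ne /=.
apply/forall_inP => u uT; apply/forall_inP => w wT; apply/implyP.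
exact: simplex_edge HS (sub u uT) (sub w wT).
Qed.

Lemma ksimplex_card k S : ksimplex k S -> #|S| = k.+1.
Proof. by case/andP=> _ /eqP. Qed.

Lemma ksimplex_simplex k S : ksimplex k S -> simplex S.
Proof. by case/andP. Qed.

Lemma facet_simplex k S v : ksimplex k.+1 S -> simplex (S :\ v).
Proof.
move=> HS; apply: (simplex_sub (ksimplex_simplex HS)); first exact: subD1set.
apply: contra_eqN (cardsD1 v S) => /eqP->.
by rewrite cards0 (ksimplex_card HS); case: (v \in S).
Qed.

Lemma facet_simplex_gt0 k S v : (0 < k)%N -> ksimplex k S -> simplex (S :\ v).
Proof. by case: k => // k _ /facet_simplex. Qed.

Lemma facet_ksimplex k S v : ksimplex k.+1 S -> v \in S -> ksimplex k (S :\ v).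
Proof.
move=> HS vS; rewrite /is_ksimplex (facet_simplex v HS).
by have := cardsD1 v S; rewrite vS (ksimplex_card HS) add1n => -[<-]; rewrite eqxx.
Qed.

Lemma boundary_facet k S v : ksimplex k S -> v \in S -> simplex (S :\ v) ->
  bd k (cell_idx S) (cell_idx (S :\ v)) = sgn S v.
Proof.
move=> HS vS HT; rewrite boundaryE !cell_idxK HS HT (big_pred1 v) // => u /=.
apply/idP/eqP => [/andP[uS /eqP E]|->]; last by rewrite vS eqxx.
apply/eqP; apply: contraT => uv.
by have := setD11 v S; rewrite E in_setD1 eq_sym uv vS.
Qed.

Lemma boundary_support k a b : bd k a b != 0 ->
  ksimplex k (cell a) /\ exists2 v, v \in cell a & cell b = cell a :\ v.
Proof.
rewrite boundaryE; case: ifP => [/andP[Hk _] nz|]; last by rewrite eqxx.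
split=> //; case: (pickP [pred v | (v \in cell a) && (cell b == cell a :\ v)]).
  by move=> v /andP[vS /eqP E]; exists v.
by move=> none; rewrite big_pred0 ?eqxx in nz.
Qed.

Lemma boundary_row k S (g : 'I_NN -> F) : ksimplex k.+1 S ->
  \sum_b bd k.+1 (cell_idx S) b * g b =
  \sum_(v in S) sgn S v * g (cell_idx (S :\ v)).
Proof.
move=> HS.
transitivity (\sum_b \sum_(v in S) (if cell b == S :\ v then sgn S v * g b else 0)).
  apply: eq_bigr => b _; rewrite boundaryE cell_idxK HS /=.
  case: ifP => Hb.
    by rewrite big_distrl big_mkcondr; apply: eq_bigr => v _; case: ifP.
  rewrite mul0r big1 // => v vS; case: ifP => // /eqP E.
  by rewrite E (facet_simplex v HS) in Hb.
rewrite exchange_big; apply: eq_bigr => v vS.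
rewrite -big_mkcond (big_pred1 (cell_idx (S :\ v))) // => b /=.
by apply/eqP/eqP => [<-|->]; rewrite ?cellK ?cell_idxK.
Qed.

Lemma card_below_D1 (S : {set 'I_n}) (v w : 'I_n) : v != w ->
  #|[set u in S | (u < w)%N]| =
  (((v \in S) && (v < w)%N) + #|[set u in S :\ v | (u < w)%N]|)%N.
Proof.
move=> vw; rewrite (cardsD1 v) inE; congr (_ + _)%N.
by apply: eq_card => u; rewrite !inE; case: (u =P v) => [->|].
Qed.

Lemma sgn_swap (S : {set 'I_n}) (v w : 'I_n) : v \in S -> w \in S -> v != w ->
  sgn S v * sgn (S :\ v) w = - (sgn S w * sgn (S :\ w) v).
Proof.
wlog lt : v w / (v < w)%N.
  move=> W vS wS vw; case: (ltngtP v w) => [lt|lt|/val_inj eq]; first exact: W.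
    by rewrite (W w v lt wS vS) ?opprK // eq_sym.
  by rewrite eq eqxx in vw.
move=> vS _ vw; rewrite /sgn (card_below_D1 S vw) (card_below_D1 S (v:=w) (w:=v)).
  by rewrite ltnNge (ltnW lt) andbF vS lt add0n add1n exprS; ring.
by rewrite eq_sym.
Qed.

(* An alternating double sum vanishes (no division by 2: works in any characteristic). *)
Lemma sum_antisym (G : 'I_n -> 'I_n -> F) :
  (forall v w, G v w = - G w v) -> (forall v, G v v = 0) ->
  \sum_v \sum_w G v w = 0.
Proof.
move=> As D.
have split_lt : \sum_v \sum_w G v w =
    \sum_(v : 'I_n) \sum_(w : 'I_n) (if (v < w)%N then G v w else 0) +
    \sum_(v : 'I_n) \sum_(w : 'I_n) (if (w < v)%N then G v w else 0).
  rewrite -big_split; apply: eq_bigr => v _; rewrite -big_split; apply: eq_bigr => w _ /=.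
  by case: (ltngtP v w) => [_|_|/val_inj->]; rewrite ?addr0 ?add0r ?D.
rewrite split_lt [X in _ + X]exchange_big -big_split big1 // => v _.
rewrite -big_split big1 // => w _ /=.
by case: ifP => _; rewrite ?(As v w) ?addNr ?addr0.
Qed.

(* d_k \o d_(k+1) = 0 for k >= 1 (d_0 is the zero map, so k = 0 is excluded). *)
Lemma boundary_boundary k : (0 < k)%N -> bd k.+1 *m bd k = 0.
Proof.
move=> k_gt0; apply/matrixP => a c; rewrite !mxE.
case Ha: (ksimplex k.+1 (cell a)); last first.
  by rewrite big1 // => b _; rewrite boundaryE Ha mul0r.
rewrite -[a]cellK (boundary_row _ Ha); set S := cell a.
case Hc: (simplex (cell c)); last first.
  by rewrite big1 // => v _; rewrite boundaryE Hc andbF mulr0.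
pose G v w := if [&& v \in S, w \in S, v != w & cell c == S :\ v :\ w]
  then sgn S v * sgn (S :\ v) w else 0.
transitivity (\sum_v \sum_w G v w).
  rewrite big_mkcond; apply: eq_bigr => v _.
  case: ifP => vS; last by rewrite big1 // => w _; rewrite /G vS.
  rewrite boundaryE cell_idxK (facet_ksimplex Ha vS) Hc mulr_sumr big_mkcond.
  apply: eq_bigr => w _; rewrite /G vS in_setD1 eq_sym.
  by case: (w \in S); case: (v != w); rewrite ?andbF ?mulr0.
apply: sum_antisym => [v w|v]; last by rewrite /G eqxx !andbF.
rewrite /G [S :\ w :\ v]setDDl setUC -setDDl.
case vS: (v \in S); case wS: (w \in S); rewrite ?andbF ?oppr0 //=.
case: (eqVneq v w) => [->|vw]; first by rewrite oppr0.
by case: (_ == _); rewrite ?oppr0 // sgn_swap.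
Qed.

Lemma chains_support k (z : 'rV[F]_NN) a :
  (z <= ch k)%MS -> ~~ ksimplex k (cell a) -> z 0 a = 0.
Proof.
case/submxP => w -> Ha; rewrite /chains mul_mx_diag !mxE.
by rewrite /cell in Ha; rewrite (negbTE Ha) mulr0.
Qed.

Lemma chains_support_ksimplex k (z : 'rV[F]_NN) a :
  (z <= ch k)%MS -> z 0 a != 0 -> ksimplex k (cell a).
Proof. by move=> Hz; apply: contraNT => /(chains_support Hz) ->. Qed.

Lemma chainsP k (z : 'rV[F]_NN) :
  (forall a, ~~ ksimplex k (cell a) -> z 0 a = 0) -> (z <= ch k)%MS.
Proof.
move=> H; apply/submxP; exists z; rewrite /chains mul_mx_diag.
apply/rowP => j; rewrite !mxE.
case Hj: (is_ksimplex e k (enum_val j)); first by rewrite mulr1.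
by rewrite H ?mul0r // /cell Hj.
Qed.

Lemma chains_eq0 k : (forall S, ~~ ksimplex k S) -> ch k = 0.
Proof.
move=> H; apply/matrixP => i j; rewrite !mxE.
by rewrite (negbTE (H _)) mul0rn.
Qed.

Lemma boundaries_sub_chains k : (boundaries F e k <= ch k)%MS.
Proof.
apply: submx_trans (submxMl _ _) _; apply/row_subP => a; apply: chainsP => b Hb.
rewrite mxE; apply: contraNeq Hb => /boundary_support[Ha [v va ->]].
exact: facet_ksimplex.
Qed.

Lemma boundaries_are_cycles k (z : 'rV[F]_NN) :
  (0 < k)%N -> (z <= boundaries F e k)%MS -> z *m bd k = 0.
Proof. by move=> k_gt0 /submxP[w ->]; rewrite -!mulmxA boundary_boundary ?mulmx0. Qed.

Definition link_simplex v k S := [&& ksimplex k S, v \notin S & simplex (v |: S)].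

Lemma link_cone_ksimplex v k S : link_simplex v k S -> ksimplex k.+1 (v |: S).
Proof.
case/and3P=> Hk vS Hs; rewrite /is_ksimplex Hs cardsU1 vS (ksimplex_card Hk).
by rewrite add1n eqxx.
Qed.

(* The cone operator S |-> sgn (v |: S) v . (v |: S) on link simplices; composed
   with the boundary it is the chain homotopy used to contract the star of v. *)
Definition cone v k : 'M[F]_NN := \matrix_(a, b)
  (if link_simplex v k (cell a) then
     sgn (v |: cell a) v * (b == cell_idx (v |: cell a))%:R else 0).

Definition cone_bd v k := cone v k *m bd k.+1.

Lemma cone_bdE v k a b : cone_bd v k a b =
  if link_simplex v k (cell a) then
    sgn (v |: cell a) v * bd k.+1 (cell_idx (v |: cell a)) b else 0.
Proof.
rewrite mxE; under eq_bigr do rewrite mxE.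
case: ifP => _; last by rewrite big1 // => c _; rewrite mul0r.
rewrite (bigD1 (cell_idx (v |: cell a))) //= eqxx mulr1 big1 ?addr0 // => c /negbTE ->.
by rewrite mulr0 mul0r.
Qed.

Lemma cone_bd_boundaries v k (z : 'rV[F]_NN) :
  (z *m cone_bd v k <= boundaries F e k)%MS.
Proof.
rewrite mulmxA; apply: submxMr; apply: chainsP => c Hc; rewrite mxE big1 // => a _.
rewrite mxE; case: ifP => Ha; last by rewrite mulr0.
case: (eqVneq c (cell_idx (v |: cell a))) => [Ec|]; last by rewrite !mulr0.
by rewrite Ec cell_idxK (link_cone_ksimplex Ha) in Hc.
Qed.

Lemma cone_bd_off v k (z : 'rV[F]_NN) b : v \notin cell b ->
  (z *m cone_bd v k) 0 b = if link_simplex v k (cell b) then z 0 b else 0.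
Proof.
move=> vb; rewrite mxE (bigD1 b) //= big1 ?addr0; last first.
  move=> a ab; rewrite cone_bdE; case: ifP => Ha; last by rewrite mulr0.
  case: (eqVneq (bd k.+1 (cell_idx (v |: cell a)) b) 0) => [->|nz]; first by rewrite !mulr0.
  case: (boundary_support nz) => _ [u]; rewrite cell_idxK => uS Eb.
  case: (eqVneq u v) => [Euv|uv].
    case/and3P: Ha => _ va _; move: Eb; rewrite Euv setU1K // => /cell_inj Eb.
    by rewrite Eb eqxx in ab.
  by move: vb; rewrite Eb in_setD1 eq_sym uv setU11.
rewrite cone_bdE; case: ifP => Hb; last by rewrite mulr0.
case/and3P: (Hb) => /ksimplex_simplex HS vS _.
have := boundary_facet (link_cone_ksimplex Hb) (setU11 v (cell b)).
by rewrite setU1K // cellK => ->; rewrite ?sgn_sq ?mulr1.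
Qed.

(* Subtracting the boundary of the cone over the link of v: the reduced chain
   is homologous to z, is again a chain (a cycle), and away from v it vanishes
   exactly on the link of v. *)
Definition reduce v k (z : 'rV[F]_NN) := z - z *m cone_bd v k.

Lemma reduce_off v k z b : v \notin cell b ->
  reduce v k z 0 b = if link_simplex v k (cell b) then 0 else z 0 b.
Proof.
move=> vb; rewrite mxE [X in _ + X]mxE cone_bd_off //.
by case: ifP => _; rewrite ?subrr ?subr0.
Qed.

Lemma reduce_chain v k z : (z <= ch k)%MS -> (reduce v k z <= ch k)%MS.
Proof.
move=> Hz; apply: addmx_sub Hz _; rewrite (eqmx_opp (z *m cone_bd v k)).
exact: submx_trans (cone_bd_boundaries _ _ _) (boundaries_sub_chains k).
Qed.

Lemma reduce_cycle v k z : (0 < k)%N -> z *m bd k = 0 -> reduce v k z *m bd k = 0.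
Proof.
move=> k_gt0 Hc; rewrite mulmxBl Hc.
by rewrite (boundaries_are_cycles k_gt0 (cone_bd_boundaries _ _ _)) subr0.
Qed.

Lemma boundaries_of_reduce v k z :
  (reduce v k z <= boundaries F e k)%MS -> (z <= boundaries F e k)%MS.
Proof. by move=> H; rewrite -(subrK (z *m cone_bd v k) z) addmx_sub ?cone_bd_boundaries. Qed.

(* If a k-cycle vanishes on all cofaces of the simplex cell b but one, it also
   vanishes on the remaining one (read off the coefficient of cell b in d z). *)
Lemma cycle_coface_zero k (z : 'rV[F]_NN) b w0 :
  (z <= ch k)%MS -> z *m bd k = 0 -> simplex (cell b) -> w0 \notin cell b ->
  (forall w, w \notin cell b -> w != w0 -> z 0 (cell_idx (w |: cell b)) = 0) ->
  z 0 (cell_idx (w0 |: cell b)) = 0.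
Proof.
move=> Hz Hc Hb w0b Hw; have := congr1 (fun m : 'rV[F]_NN => m 0 b) Hc.
rewrite !mxE (bigD1 (cell_idx (w0 |: cell b))) //= big1 ?addr0; last first.
  move=> a ne; case: (eqVneq (bd k a b) 0) => [->|nz]; first by rewrite mulr0.
  case: (boundary_support nz) => _ [u ua Eb].
  have ub : u \notin cell b by rewrite Eb setD11.
  have Ea : cell a = u |: cell b by rewrite Eb setD1K.
  have uw0 : u != w0 by apply: contraNneq ne => Eu; rewrite -Eu -Ea cellK.
  by rewrite -[a]cellK Ea Hw // mul0r.
case Hk: (ksimplex k (w0 |: cell b)); last first.
  by move=> _; apply: (chains_support Hz); rewrite cell_idxK Hk.
have := boundary_facet Hk (setU11 w0 (cell b)); rewrite setU1K // cellK => -> //.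
by move/eqP; rewrite mulf_eq0 (negbTE (sgn_neq0 _ _)) orbF => /eqP.
Qed.

Lemma star_cycle_boundary v k (z : 'rV[F]_NN) :
  (0 < k)%N -> (z <= ch k)%MS -> z *m bd k = 0 ->
  (forall a, z 0 a != 0 -> (v \in cell a) || simplex (v |: cell a)) ->
  (z <= boundaries F e k)%MS.
Proof.
move=> k_gt0 Hz Hc Hstar; apply: (boundaries_of_reduce (v := v)).
set z' := reduce v k z.
have Hz' := reduce_chain v Hz; have Cz' := reduce_cycle v k_gt0 Hc.
have off b : v \notin cell b -> z' 0 b = 0.
  move=> vb; rewrite reduce_off //; case: ifP => // /negbT Hb.
  apply/eqP; apply: contraNT Hb => nz; move: (Hstar b nz); rewrite (negbTE vb) /= => Hs.
  rewrite /link_simplex vb Hs !andbT; apply: contraT => Hk.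
  by rewrite (chains_support Hz Hk) eqxx in nz.
suff -> : z' = 0 by exact: sub0mx.
apply/rowP => b; rewrite [RHS]mxE; case vb: (v \in cell b); last by rewrite off ?vb.
case Hk: (ksimplex k (cell b)); last by apply: (chains_support Hz'); rewrite Hk.
have HT : simplex (cell b :\ v) by apply: facet_simplex_gt0 Hk.
have := cycle_coface_zero (b := cell_idx (cell b :\ v)) (w0 := v) Hz' Cz'.
rewrite cell_idxK setD1K // cellK; apply => //; first by rewrite setD11.
move=> w wT wv; apply: off; rewrite cell_idxK in_setU1 eq_sym (negbTE wv).
by rewrite setD11.
Qed.

Lemma betti_le k m (P : 'M[F]_(NN, m)) :
  (forall z : 'rV[F]_NN, (z <= ch k)%MS -> z *m bd k = 0 -> z *m P = 0 ->
     (z <= boundaries F e k)%MS) -> (betti F e k <= m)%N.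
Proof.
move=> H; rewrite /betti; have rk_ker := mxrank_mul_ker (cycles F e k) P.
have sub_bd : (cycles F e k :&: kermx P <= boundaries F e k)%MS.
  apply/row_subP => i; have := row_sub i (cycles F e k :&: kermx P)%MS.
  rewrite !sub_capmx => /andP[/andP[Hc /sub_kermxP Hk] /sub_kermxP HP].
  exact: H.
have := mxrankS sub_bd; have := rank_leq_col (cycles F e k *m P); lia.
Qed.

Lemma edge_sgn_sum (p q : 'I_n) : p != q ->
  \sum_(v in [set p; q]) sgn [set p; q] v = 0.
Proof.
wlog lt : p q / (p < q)%N.
  move=> W pq; case: (ltngtP p q) => [lt|lt|/val_inj eq]; first exact: W.
    by rewrite setUC W // eq_sym.
  by rewrite eq eqxx in pq.
move=> pq; rewrite big_setU1 ?big_set1 ?in_set1 //= /sgn.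
have -> : [set u in [set p; q] | (u < p)%N] = set0.
  apply/setP => u; rewrite !inE.
  case: (eqVneq u p) => [->|_]; first by rewrite ltnn.
  by case: (eqVneq u q) => [->|]; rewrite ?ltnNge ?(ltnW lt).
have -> : [set u in [set p; q] | (u < q)%N] = [set p].
  apply/setP => u; rewrite !inE.
  case: (eqVneq u p) => [->|_]; first by rewrite lt.
  by case: (eqVneq u q) => [->|]; rewrite ?ltnn.
by rewrite cards0 cards1 expr0 expr1 addrN.
Qed.

Lemma boundary1_augmentation : bd 1 *m const_mx 1 = 0 :> 'M[F]_(NN, 1).
Proof.
apply/matrixP => a j; rewrite [LHS]mxE [RHS]mxE.
case Ha: (ksimplex 1 (cell a)); last first.
  by rewrite big1 // => b _; rewrite boundaryE Ha mul0r.
under eq_bigr do rewrite [X in _ * X]mxE.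
rewrite -[a]cellK (boundary_row (fun=> 1) Ha).
case/andP: Ha => _ /cards2P[p [q [pq ->]]].
by under eq_bigr do rewrite mulr1; rewrite edge_sgn_sum.
Qed.

Definition vertex_chains : 'M[F]_(n, NN) :=
  \matrix_(i, b) (b == cell_idx [set i])%:R.

Lemma boundary1_vertex_chains : (bd 1 <= vertex_chains)%MS.
Proof.
apply/row_subP => a; apply/submxP; exists (\row_i bd 1 a (cell_idx [set i])).
apply/rowP => b; rewrite [LHS]mxE [RHS]mxE.
under eq_bigr do rewrite [X in X * _]mxE [X in _ * X]mxE.
case: (boolP [exists i, cell b == [set i]]) => [/existsP[i0 /eqP Eb]|none].
  rewrite (bigD1 i0) //= big1 => [|i ii0]; first by rewrite /= addr0 -Eb cellK eqxx mulr1.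
  rewrite -[b]cellK Eb (inj_eq cell_idx_inj) (inj_eq set1_inj) eq_sym.
  by rewrite (negbTE ii0) mulr0.
rewrite big1 => [|i _]; last first.
  case: eqP => [Ebi|]; last by rewrite mulr0.
  by case/existsP: none; exists i; rewrite Ebi cell_idxK.
apply/eqP; apply: contraNT none => /boundary_support [Ha [v va Eb]].
have /andP[_ /cards1P[i Ei]] := facet_ksimplex Ha va.
by apply/existsP; exists i; rewrite Eb Ei.
Qed.

(* The image of d_1 lies in the 0-chains of coefficient sum zero, of rank n - 1. *)
Lemma rank_boundary1 : (0 < n)%N -> (\rank (bd 1) <= n.-1)%N.
Proof.
move=> n_gt0; pose v0 := Ordinal n_gt0; pose aug : 'M[F]_(NN, 1) := const_mx 1.
have sub : (bd 1 <= vertex_chains :&: kermx aug)%MS.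
  by rewrite sub_capmx boundary1_vertex_chains; apply/sub_kermxP/boundary1_augmentation.
have aug_v0 : (vertex_chains *m aug) v0 0 = 1.
  rewrite mxE (bigD1 (cell_idx [set v0])) //= big1 => [|b /negbTE nb].
    by rewrite !mxE eqxx mul1r addr0.
  by rewrite !mxE nb mul0r.
have : (0 < \rank (vertex_chains *m aug))%N.
  rewrite lt0n mxrank_eq0; apply: contra_eqN aug_v0 => /eqP ->.
  by rewrite mxE eq_sym oner_eq0.
have := mxrank_mul_ker vertex_chains aug; have := rank_leq_row vertex_chains.
have := mxrankS sub; lia.
Qed.

(* Distinct k-simplices give independent chains: their number bounds rank C_k. *)
Lemma card_ksimplices_le_rank k :
  (#|[set a | ksimplex k (cell a)]| <= \rank (ch k))%N.
Proof.
set C := [set a | ksimplex k (cell a)].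
pose rho : 'M[F]_(#|C|, NN) := \matrix_(j, b) (b == enum_val j)%:R.
have rho_ch : (rho <= ch k)%MS.
  apply/row_subP => j; apply: chainsP => b Hb; rewrite !mxE.
  by case: eqP => // Eb; have := enum_valP j; rewrite inE -Eb (negbTE Hb).
have rho_orth : rho *m rho^T = 1%:M.
  apply/matrixP => i j; rewrite !mxE (bigD1 (enum_val i)) //= big1 ?addr0.
    by rewrite !mxE eqxx mul1r (inj_eq enum_val_inj) eq_sym.
  by move=> b /negbTE nb; rewrite !mxE nb mul0r.
have := mxrankM_maxl rho rho^T; rewrite rho_orth mxrank1 => /leq_trans; apply.
exact: mxrankS.
Qed.

Lemma betti1_ge : (0 < n)%N -> (forall S, ~~ ksimplex 2 S) ->
  (#|[set a | ksimplex 1 (cell a)]| - n.-1 <= betti F e 1)%N.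
Proof.
move=> n_gt0 no_triangle.
have -> : betti F e 1 = \rank (cycles F e 1).
  by rewrite /betti /boundaries chains_eq0 // mul0mx mxrank0 subn0.
have := mxrank_mul_ker (ch 1) (bd 1); have := card_ksimplices_le_rank 1.
have := leq_trans (mxrankM_maxr (ch 1) (bd 1)) (rank_boundary1 n_gt0).
rewrite /cycles; lia.
Qed.

End CliqueComplex.

Section SymmetricGraph.
Variable n : nat.
Variable e : rel 'I_n.
Hypothesis e_sym : forall i j, e i j = e j i.
Local Notation simplex := (is_simplex e).

Lemma simplexU1 x S : simplex S ->
  (forall u, u \in S -> u != x -> e x u) -> simplex (x |: S).
Proof.
move=> HS H; apply/andP; split; first by apply/set0Pn; exists x; rewrite setU11.
apply/forall_inP => u; rewrite in_setU1 => /predU1P[->|uS];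
  apply/forall_inP => w; rewrite in_setU1 => /predU1P[->|wS]; apply/implyP => uw.
- by rewrite eqxx in uw.
- by apply: H; rewrite // eq_sym.
- by rewrite e_sym; apply: H.
- exact: simplex_edge HS uS wS uw.
Qed.

Lemma simplexU1_witness x S : simplex S -> ~~ simplex (x |: S) ->
  exists2 u, u \in S & (u != x) && ~~ e x u.
Proof.
move=> HS notS; case: (boolP [exists u in S, (u != x) && ~~ e x u]).
  by case/exists_inP => u uS Hu; exists u.
move=> /exists_inPn none; case/negP: notS; apply: simplexU1 HS _ => u uS ux.
by have := none u uS; rewrite ux negbK.
Qed.

Lemma edge_ksimplex p q : p != q -> e p q -> is_ksimplex e 1 [set p; q].
Proof.
move=> pq epq; rewrite /is_ksimplex cards2 pq eqxx andbT.
by apply: simplexU1 (simplex1 e q) _ => u /set1P ->.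
Qed.

Lemma ksimplex1_edge S : is_ksimplex e 1 S ->
  exists p q, [/\ p != q, e p q & S = [set p; q]].
Proof.
case/andP => HS /cards2P[p [q [pq ES]]]; exists p, q; split => //.
by apply: simplex_edge HS _ _ pq; rewrite ES ?set21 ?set22.
Qed.
End SymmetricGraph.

Definition edges_cross n l (e : rel 'I_n) :=
  forall p q : 'I_n, p != q -> e p q -> (p < l)%N != (q < l)%N.
Definition cross_complete n l (e : rel 'I_n) :=
  forall u w : 'I_n, (u < l)%N -> (l <= w)%N -> e u w.

Definition right_part n l (S : {set 'I_n}) := [set w in S | (l <= w)%N].

Definition cross n l (S : {set 'I_n}) :=
  [exists u : 'I_n, exists w : 'I_n, [&& (u < l)%N, (l <= w)%N & S == [set u; w]]].

Lemma cross_set2 n l (x y : 'I_n) : cross l [set x; y] = ((x < l)%N != (y < l)%N).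
Proof.
apply/existsP/idP => [[u /existsP[w /and3P[ul lw /eqP E]]]|xy].
  have uw : u != w by apply: contraTneq (leq_trans ul lw) => ->; rewrite ltnn.
  have uS : u \in [set x; y] by rewrite E set21.
  have wS : w \in [set x; y] by rewrite E set22.
  move: uS wS ul lw uw; rewrite !inE => /orP[]/eqP-> /orP[]/eqP->; rewrite ?eqxx //;
    by move=> ul lw _; rewrite ul ltnNge lw.
case/orP: (orbN (x < l)%N) => xl.
  exists x; apply/existsP; exists y; rewrite xl eqxx andbT leqNgt.
  by move: xy; rewrite xl; case: (y < l)%N.
exists y; apply/existsP; exists x; rewrite setUC eqxx andbT [(l <= x)%N]leqNgt xl andbT.
by move: xy; rewrite (negbTE xl); case: (y < l)%N.
Qed.

Lemma edges_cross_no_simplex n l (e : rel 'I_n) k S :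
  edges_cross l e -> (1 < k)%N -> ~~ is_ksimplex e k S.
Proof.
move=> ecross k_gt1; apply/negP => Hk; have HS := ksimplex_simplex Hk.
set L := [set u : 'I_n | (u < l)%N].
have : (1 < #|S :&: L|)%N || (1 < #|S :\: L|)%N.
  apply: contraTT k_gt1; rewrite negb_or -!leqNgt => /andP[small_l small_r].
  have := cardsID L S; rewrite (ksimplex_card Hk).
  by move: #|_ :&: _| #|_ :\: _| small_l small_r => a b; lia.
case/orP => /card_gt1P[p [q]]; rewrite !inE.
  move=> [/andP[pS pl] /andP[qS ql] pq].
  by have := ecross p q pq (simplex_edge HS pS qS pq); rewrite pl ql.
move=> [/andP[pl pS] /andP[ql qS] pq].
by have := ecross p q pq (simplex_edge HS pS qS pq); rewrite (negbTE pl) (negbTE ql).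
Qed.

Lemma another_left_vertex n l (S : {set 'I_n}) s u :
  (2 < #|S|)%N -> right_part l S = [set s] -> u \in S ->
  exists u', [/\ u' \in S, u' != u & (u' < l)%N].
Proof.
move=> S_gt2 Es uS.
have : (1 < #|S :\ u|)%N by have := cardsD1 u S; rewrite uS; lia.
case/card_gt1P => [t1 [t2 [t1S t2S t12]]]; move: t1S t2S; rewrite !inE.
move=> /andP[t1u t1S] /andP[t2u t2S].
have right_is_s t : t \in S -> (l <= t)%N -> t = s.
  by move=> tS lt; apply/set1P; rewrite -Es inE tS lt.
case: (ltnP t1 l) => t1l; first by exists t1.
case: (ltnP t2 l) => t2l; first by exists t2.
by move: t12; rewrite (right_is_s t1) // (right_is_s t2) // eqxx.
Qed.

Lemma card_left n l : (l <= n)%N -> #|[set u : 'I_n | (u < l)%N]| = l.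
Proof.
move=> ln; have widen_inj : injective (widen_ord ln) by move=> u v /(congr1 val) /= /val_inj.
rewrite -[RHS](card_ord l) -cardsT -(card_imset _ widen_inj).
apply: eq_card => u; rewrite inE; apply/idP/imsetP => [ul|[v _ ->]].
  by exists (Ordinal ul) => //; apply: val_inj.
by rewrite /= ltn_ord.
Qed.

Lemma card_right n l : (l <= n)%N -> #|[set u : 'I_n | (l <= u)%N]| = (n - l)%N.
Proof.
move=> ln; have := cardsC [set u : 'I_n | (u < l)%N]; rewrite card_left // card_ord.
have -> : ~: [set u : 'I_n | (u < l)%N] = [set u : 'I_n | (l <= u)%N].
  by apply/setP => u; rewrite !inE -leqNgt.
lia.
Qed.

Lemma row_mul_select (R : nzRingType) m p (u : 'rV[R]_m) (f : 'I_p -> 'I_m) j :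
  (u *m \matrix_(a, j) (a == f j)%:R) 0 j = u 0 (f j).
Proof.
rewrite mxE (bigD1 (f j)) //= big1 ?addr0; first by rewrite mxE eqxx mulr1.
by move=> a /negbTE na; rewrite mxE na mulr0.
Qed.

Section SplitThreshold.
Variable F : fieldType.
Variables n l : nat.
Variable e : rel 'I_n.
Hypothesis e_sym : forall i j, e i j = e j i.
Variables a0 b0 : 'I_n.
Hypothesis a0_left : (a0 < l)%N.
Hypothesis b0_right : (l <= b0)%N.
Hypothesis a0_hub : forall u v : 'I_n, (u < l)%N -> (v < l)%N -> u != v ->
  e u v -> u != a0 -> e u a0.
Hypothesis b0_hub : forall u v : 'I_n, (l <= u)%N -> (l <= v)%N -> u != v ->
  e u v -> u != b0 -> e u b0.

Local Notation NN := (N n).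
Local Notation simplex := (is_simplex e).
Local Notation ksimplex := (is_ksimplex e).

Section ReduceAtRightHub.
Hypothesis complete : cross_complete l e.
Variable k : nat.
Variable z : 'rV[F]_NN.
Hypothesis z_chain : (z <= chains F e k)%MS.
Local Notation z' := (reduce e b0 k z).

Lemma reduce_off_star b : z' 0 b != 0 -> b0 \notin cell b ->
  exists2 s, right_part l (cell b) = [set s] & ~~ e s b0.
Proof.
move=> + b0S; rewrite reduce_off //; case: ifP => [_|not_link nz]; first by rewrite eqxx.
have Hk := chains_support_ksimplex z_chain nz; have HS := ksimplex_simplex Hk.
have : ~~ simplex (b0 |: cell b).
  by apply: contraFN not_link => Hs; rewrite /link_simplex Hk b0S.
case/(simplexU1_witness e_sym HS) => s sS /andP[sb0 not_adj].
have ls : (l <= s)%N by rewrite leqNgt; apply: contra not_adj => sl; rewrite e_sym complete.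
exists s; last by rewrite e_sym.
apply/setP => t; rewrite !inE; apply/andP/eqP => [[tS lt]|->]; last by rewrite sS.
apply/eqP; apply: contraNT not_adj => ts; have st : s != t by rewrite eq_sym.
by rewrite e_sym (b0_hub ls lt st (simplex_edge HS sS tS st) sb0).
Qed.

Lemma reduce_right_singleton b : (0 < k)%N -> z *m boundary F e k = 0 ->
  z' 0 b != 0 -> exists s, right_part l (cell b) = [set s].
Proof.
move=> k_gt0 z_cycle nz; case: (boolP (b0 \in cell b)) => b0S; last first.
  by have [s ? _] := reduce_off_star nz b0S; exists s.
have Hk := chains_support_ksimplex (reduce_chain b0 z_chain) nz.
have HT : simplex (cell b :\ b0) by apply: facet_simplex_gt0 Hk.
exists b0; apply/setP => t; rewrite !inE.
apply/andP/eqP => [[tS lt]|->]; last by rewrite b0S.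
apply/eqP; apply: contraNT nz => tb0; apply/eqP.
have := cycle_coface_zero (b := cell_idx (cell b :\ b0)) (w0 := b0)
  (reduce_chain b0 z_chain) (reduce_cycle b0 k_gt0 z_cycle).
rewrite cell_idxK setD1K // cellK; apply => //; first by rewrite setD11.
move=> w wT wb0; apply/eqP; apply: contraT => nzw.
have b0w : b0 \notin cell (cell_idx (w |: cell b :\ b0)).
  by rewrite cell_idxK !inE negb_or eq_sym wb0 eqxx.
have [s Es not_adj] := reduce_off_star nzw b0w.
have : t \in right_part l (cell (cell_idx (w |: cell b :\ b0))).
  by rewrite cell_idxK !inE tb0 tS orbT lt.
rewrite Es => /set1P ts; move: not_adj; rewrite -ts.
by rewrite (simplex_edge (ksimplex_simplex Hk) tS b0S tb0).
Qed.

End ReduceAtRightHub.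

Hypothesis edges_cross_or_complete : edges_cross l e \/ cross_complete l e.

Lemma reduce1_cross (z : 'rV[F]_NN) :
  (z <= chains F e 1)%MS -> z *m boundary F e 1 = 0 ->
  forall b, reduce e b0 1 z 0 b != 0 -> cross l (cell b).
Proof.
move=> Hz Hc b nz; have Hk := chains_support_ksimplex (reduce_chain b0 Hz) nz.
have [p [q [pq epq Eb]]] := ksimplex1_edge Hk; rewrite Eb cross_set2.
case: edges_cross_or_complete => [ecross|complete]; first exact: ecross.
have [s] := reduce_right_singleton complete Hz (ltn0Sn 0) Hc nz; rewrite Eb => Es.
have right_is_s (u : 'I_n) : u \in [set p; q] -> (l <= u)%N -> u = s.
  by move=> uS lu; apply/set1P; rewrite -Es inE uS lu.
have : s \in right_part l [set p; q] by rewrite Es set11.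
rewrite !inE => /andP[sS ls].
case: (ltnP p l) => pl; case: (ltnP q l) => ql //.
  by case/orP: sS => /eqP Es'; move: ls; rewrite Es' leqNgt ?pl ?ql.
by move: pq; rewrite (right_is_s p (set21 p q) pl) (right_is_s q (set22 p q) ql) eqxx.
Qed.

Section CrossCycle.
Variable z : 'rV[F]_NN.
Hypothesis z_chain : (z <= chains F e 1)%MS.
Hypothesis z_cycle : z *m boundary F e 1 = 0.
Hypothesis z_cross : forall b, z 0 b != 0 -> cross l (cell b).

Lemma cross_leaf (x y : 'I_n) : y != x ->
  (forall y' : 'I_n, y' != y -> (y' < l)%N != (x < l)%N ->
     z 0 (cell_idx [set y'; x]) = 0) ->
  z 0 (cell_idx [set y; x]) = 0.
Proof.
move=> yx Hy; have := cycle_coface_zero (b := cell_idx [set x]) (w0 := y) z_chain z_cycle.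
rewrite !cell_idxK; apply; rewrite ?simplex1 ?in_set1 //.
move=> w _ wy; have [//|nz] := eqVneq (z 0 (cell_idx [set w; x])) 0.
by apply: Hy => //; move: (z_cross nz); rewrite cell_idxK cross_set2.
Qed.

(* If moreover z vanishes off the stars of the hubs, then z = 0: the crossing
   edges at a0 or b0 form a spanning tree of K_{l, n - l}. *)
Lemma cross_cycle_zero :
  (forall u w : 'I_n, (u < l)%N -> u != a0 -> (l <= w)%N -> w != b0 ->
     z 0 (cell_idx [set u; w]) = 0) ->
  z = 0.
Proof.
move=> Hinner; have a0_w (w : 'I_n) : (l <= w)%N -> a0 != w.
  by move=> lw; apply: contraTneq (leq_trans a0_left lw) => ->; rewrite ltnn.
have at_a0 (w : 'I_n) : (l <= w)%N -> w != b0 -> z 0 (cell_idx [set a0; w]) = 0.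
  move=> lw wb0; apply: cross_leaf (a0_w w lw) _ => y' y'a0 side; apply: Hinner => //.
  by move: side; rewrite [(w < l)%N]ltnNge lw; case: (y' < l)%N.
have at_b0 (u : 'I_n) : (u < l)%N -> u != a0 -> z 0 (cell_idx [set b0; u]) = 0.
  move=> ul ua0; apply: cross_leaf => [|y' y'b0 side].
    by apply: contraTneq (leq_trans ul b0_right) => ->; rewrite ltnn.
  rewrite setUC; apply: Hinner => //.
  by move: side; rewrite ul [(l <= y')%N]leqNgt; case: (y' < l)%N.
have at_a0b0 : z 0 (cell_idx [set b0; a0]) = 0.
  apply: cross_leaf => [|y' y'b0 side]; first by rewrite eq_sym a0_w.
  have ly' : (l <= y')%N.
    by move: side; rewrite a0_left [(l <= y')%N]leqNgt; case: (y' < l)%N.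
  by rewrite setUC at_a0.
apply/rowP => b; rewrite mxE; have [//|nz] := eqVneq (z 0 b) 0.
case/existsP: (z_cross nz) => u /existsP[w /and3P[ul lw /eqP Eb]].
rewrite -[b]cellK Eb.
case: (eqVneq u a0) => [->|ua0]; case: (eqVneq w b0) => [->|wb0].
- by rewrite setUC at_a0b0.
- exact: at_a0.
- by rewrite setUC at_b0.
- exact: Hinner.
Qed.
End CrossCycle.

(* Main upper bound: modulo boundaries, a 1-cycle is determined by its
   coefficients on the (l - 1) * (n - l - 1) crossing edges avoiding the hubs. *)
Lemma betti1_le : (betti F e 1 <= (l - 1) * (n - l - 1))%N.
Proof.
set L := [set u : 'I_n | (u < l)%N]; set R := [set w : 'I_n | (l <= w)%N].
set inner := [set cell_idx [set p.1; p.2] | p in setX (L :\ a0) (R :\ b0)].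
pose sel : 'M[F]_(NN, #|inner|) := \matrix_(a, j) (a == enum_val j)%:R.
apply: leq_trans (betti_le (P := (1%:M - cone_bd F e b0 1) *m sel) _) _.
  move=> z Hz Hc Hsel; apply: (boundaries_of_reduce (v := b0)).
  suff -> : reduce e b0 1 z = 0 by exact: sub0mx.
  apply: cross_cycle_zero (reduce_chain b0 Hz) (reduce_cycle b0 (ltn0Sn 0) Hc)
    (reduce1_cross Hz Hc) _ => u w ul ua0 lw wb0.
  have uw_in : cell_idx [set u; w] \in inner.
    by apply/imsetP; exists (u, w); rewrite // !inE ua0 ul wb0 lw.
  set j := enum_rank_in uw_in (cell_idx [set u; w]).
  have := congr1 (fun m : 'rV[F]_#|inner| => m 0 j) Hsel.
  rewrite mulmxA mulmxBr mulmx1 row_mul_select (enum_rankK_in uw_in uw_in) => H.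
  by rewrite /reduce H mxE.
have ln : (l <= n)%N by apply: leq_trans b0_right (ltnW (ltn_ord b0)).
have cardL : #|L :\ a0| = (l - 1)%N.
  by have := cardsD1 a0 L; rewrite card_left // inE a0_left; lia.
have cardR : #|R :\ b0| = (n - l - 1)%N.
  by have := cardsD1 b0 R; rewrite card_right // inE b0_right; lia.
by apply: leq_trans (leq_imset_card _ _) _; rewrite cardsX cardL cardR.
Qed.

(* No homology above dimension 1: either there are no triangles, or after
   reduction at b0 every cycle lies in the closed star of a0. *)
Lemma betti_high k : (1 < k)%N -> betti F e k = 0%N.
Proof.
move=> k_gt1; apply/eqP; rewrite -leqn0; have k_gt0 := ltnW k_gt1.
apply: (betti_le (P := 0 : 'M[F]_(NN, 0))) => z Hz Hc _.
case: edges_cross_or_complete => [ecross|complete].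
  suff -> : z = 0 by exact: sub0mx.
  by apply/rowP => b; rewrite mxE (chains_support Hz) // (edges_cross_no_simplex _ ecross).
apply: (boundaries_of_reduce (v := b0)).
apply: (star_cycle_boundary (v := a0)) (k_gt0) (reduce_chain b0 Hz)
  (reduce_cycle b0 k_gt0 Hc) _.
move=> b nz; case: (boolP (a0 \in cell b)) => //= a0S.
have Hk := chains_support_ksimplex (reduce_chain b0 Hz) nz; have HS := ksimplex_simplex Hk.
have [s Es] := reduce_right_singleton complete Hz k_gt0 Hc nz.
apply: (simplexU1 e_sym HS) => u uS ua0.
case: (ltnP u l) => ul; last exact: complete.
have [u' [u'S u'u u'l]] : exists u', [/\ u' \in cell b, u' != u & (u' < l)%N].
  by apply: another_left_vertex Es uS; rewrite (ksimplex_card Hk) ltnS.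
have uu' : u != u' by rewrite eq_sym.
by rewrite e_sym (a0_hub ul u'l uu' (simplex_edge HS uS u'S uu') ua0).
Qed.

End SplitThreshold.

Section CompleteBipartite.
Variable F : fieldType.
Variables n l : nat.
Variable e : rel 'I_n.
Hypothesis e_bip : forall i j : 'I_n, e i j = (i < l)%N (+) (j < l)%N.
Hypothesis l_le_n : (l <= n)%N.

Lemma complete_bipartite_edges :
  (l * (n - l) <= #|[set a | is_ksimplex e 1 (@cell n a)]|)%N.
Proof.
set L := [set u : 'I_n | (u < l)%N]; set R := [set w : 'I_n | (l <= w)%N].
have e_sym i j : e i j = e j i by rewrite !e_bip addbC.
have -> : (l * (n - l))%N = #|setX L R| by rewrite cardsX card_left ?card_right.
rewrite -(card_in_imset (f := fun p : 'I_n * 'I_n => cell_idx [set p.1; p.2])).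
  apply/subset_leq_card/subsetP => a /imsetP[[u w]]; rewrite !inE /= => /andP[ul lw] ->.
  have uw : u != w by apply: contraTneq (leq_trans ul lw) => ->; rewrite ltnn.
  by rewrite cell_idxK edge_ksimplex // e_bip ul ltnNge lw.
move=> [u w] [u' w']; rewrite !inE /= => /andP[ul lw] /andP[u'l lw'] /cell_idx_inj E.
have Eu : u = u'.
  move: (set21 u w); rewrite E !inE => /orP[/eqP //|/eqP Eu].
  by move: ul; rewrite Eu ltnNge lw'.
have Ew : w = w'.
  move: (set22 u w); rewrite E !inE => /orP[/eqP Ew|/eqP //].
  by move: u'l; rewrite -Ew ltnNge lw.
by rewrite Eu Ew.
Qed.

(* The clique complex of K_{l, n - l} is a graph with first Betti number
   l (n - l) - (n - 1) = (l - 1) (n - l - 1). *)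
Lemma betti1_complete_bipartite_ge : (0 < n)%N ->
  ((l - 1) * (n - l - 1) <= betti F e 1)%N.
Proof.
move=> n_gt0; have ecross : edges_cross l e.
  by move=> p q _; rewrite e_bip; case: (p < l)%N; case: (q < l)%N.
have := betti1_ge F n_gt0 (fun S => edges_cross_no_simplex S ecross (ltnSn 1)).
have := complete_bipartite_edges; move: #|_| (betti F e 1) => E b.
nia.
Qed.
End CompleteBipartite.

Section ThresholdGraph.
Variable R : realFieldType.
Variable n : nat.
Variable M : 'M[R]_n.
Variable t : R.

Lemma entry_rank_mono i j i' j' :
  M i j <= M i' j' -> (entry_rank M i j <= entry_rank M i' j')%N.
Proof.
move=> le_ij; rewrite ltnS; apply/subset_leq_card/subsetP => p; rewrite !inE.
by case/andP=> -> lt_p; exact: lt_le_trans le_ij.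
Qed.

Lemma Gt_down_closed i j i' j' :
  i != j -> Gt M t i' j' -> M i j <= M i' j' -> Gt M t i j.
Proof.
move=> ij /andP[_ rank_le] le_ij; rewrite /Gt ij; apply: le_trans rank_le.
by rewrite ler_nat entry_rank_mono.
Qed.

Lemma Gt_sym : (forall i j, M i j = M j i) -> forall i j, Gt M t i j = Gt M t j i.
Proof. by move=> M_sym i j; rewrite /Gt /entry_rank eq_sym M_sym. Qed.
End ThresholdGraph.

Section ProductGraph.
Variable R : realFieldType.
Variables n l : nat.
Variable x : 'rV[R]_n.
Hypothesis x_mono : forall i j : 'I_n, (i <= j)%N -> x 0 i <= x 0 j.
Hypothesis x_neg : forall i : 'I_n, (i < l)%N -> x 0 i < 0.
Hypothesis x_nonneg : forall i : 'I_n, (l <= i)%N -> 0 <= x 0 i.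
Variable t : R.

Local Notation M := (x^T *m x).
Local Notation e := (Gt M t).

Lemma productE i j : M i j = x 0 i * x 0 j.
Proof. by rewrite mxE big_ord1 mxE. Qed.

Lemma product_Gt_sym i j : e i j = e j i.
Proof. by apply: Gt_sym => {}i {}j; rewrite !productE mulrC. Qed.

(* On the left the entries x_u x_v grow as |x_v| grows, so the last left vertex
   (the one with the smallest |x|) receives the first left edges. *)
Lemma product_left_hub (a0 : 'I_n) : a0.+1 = l ->
  forall u v : 'I_n, (u < l)%N -> (v < l)%N -> u != v -> e u v -> u != a0 -> e u a0.
Proof.
move=> a0l u v ul vl uv euv ua0; apply: Gt_down_closed ua0 euv _.
have xv : x 0 v <= x 0 a0 by apply: x_mono; rewrite -ltnS a0l.
by have := x_neg ul; rewrite !productE; nra.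
Qed.

(* On the right the first vertex (the smallest x) receives the first right edges. *)
Lemma product_right_hub (b0 : 'I_n) : val b0 = l ->
  forall u v : 'I_n, (l <= u)%N -> (l <= v)%N -> u != v -> e u v -> u != b0 -> e u b0.
Proof.
move=> b0l u v lu lv uv euv ub0; apply: Gt_down_closed ub0 euv _.
have xv : x 0 b0 <= x 0 v by apply: x_mono; rewrite b0l.
by have := x_nonneg lu; rewrite !productE; nra.
Qed.

(* Crossing entries are negative and all others nonnegative: crossing edges all
   enter G_t before any other edge. *)
Lemma product_edges_cross_or_complete : edges_cross l e \/ cross_complete l e.
Proof.
case: (boolP [exists p, exists q, [&& p != q, e p q & (p < l)%N == (q < l)%N]]).
  case/existsP => p /existsP[q /and3P[pq epq /eqP same]]; right => u w ul lw.
  have uw : u != w by apply: contraTneq (leq_trans ul lw) => ->; rewrite ltnn.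
  apply: Gt_down_closed uw epq _; rewrite !productE.
  have xpq : 0 <= x 0 p * x 0 q.
    case: (ltnP p l) => pl.
      have ql : (q < l)%N by rewrite -same.
      by have := x_neg pl; have := x_neg ql; nra.
    have lq : (l <= q)%N by rewrite leqNgt -same -leqNgt.
    by have := x_nonneg pl; have := x_nonneg lq; nra.
  by have := x_neg ul; have := x_nonneg lw; nra.
move/existsPn => none; left => p q pq epq; apply/negP => /eqP same.
by move/existsPn/(_ q): (none p); rewrite pq epq same eqxx.
Qed.
End ProductGraph.

Unset Implicit Arguments.

Theorem theorem2 (F : fieldType) (R : realFieldType) (n l : nat)
  (x : 'rV[R]_n) :
  (2 <= n)%N -> (1 <= l)%N -> (l <= n - 1)%N ->
  (forall i j : 'I_n, (i <= j)%N -> x 0 i <= x 0 j) ->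
  (forall i : 'I_n, (i < l)%N -> x 0 i < 0) ->
  (forall i : 'I_n, (l <= i)%N -> 0 <= x 0 i) ->
  let M := x^T *m x in
  (forall i j i' j' : 'I_n, (i < j)%N -> (i' < j')%N ->
     (i, j) != (i', j') -> M i j != M i' j') ->
  forall t : R, 0 <= t <= 1 ->
    [/\ (betti F (Gt M t) 1 <= (l - 1) * (n - l - 1))%N,
        ((forall i j : 'I_n, Gt M t i j = ((i < l)%N (+) (j < l)%N)) ->
           betti F (Gt M t) 1 = ((l - 1) * (n - l - 1))%N)
      & forall k : nat, (1 < k)%N -> betti F (Gt M t) k = 0%N].
Proof.
move=> n_ge2 l_ge1 l_le x_mono x_neg x_nonneg M _ t _.
have a0_lt_n : (l.-1 < n)%N by lia.
have b0_lt_n : (l < n)%N by lia.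
pose a0 := Ordinal a0_lt_n; pose b0 := Ordinal b0_lt_n.
have a0_succ : a0.+1 = l by rewrite /= prednK.
have a0_left : (a0 < l)%N by rewrite a0_succ.
have b0_right : (l <= b0)%N by [].
have a0_hub := product_left_hub x_mono x_neg (t := t) a0_succ.
have b0_hub := product_right_hub x_mono x_nonneg (t := t) (b0 := b0) erefl.
have e_sym := product_Gt_sym x t.
have cases := product_edges_cross_or_complete x_neg x_nonneg t.
split.
- exact: (betti1_le F e_sym a0_left b0_right b0_hub cases).
- move=> e_bip; apply/eqP; rewrite eqn_leq (betti1_le F e_sym a0_left b0_right b0_hub cases).
  by rewrite (betti1_complete_bipartite_ge F e_bip (ltnW b0_lt_n)) ?(ltn_trans l_ge1 b0_lt_n).
- exact: (betti_high F e_sym a0_left b0_right a0_hub b0_hub cases).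
Qed.
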